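(* Let $X_1,X_2,\dots$ be i.i.d. $\mathrm{Bernoulli}(\rho)$ random variables with $\rho>0$, and let $Y_t=\sum_{\tau=1}^tX_\tau$. For any $\delta\in(0,1)$ and $T\in\mathbb{N}$, with probability at least $1-\delta$, $$\sum_{t=1}^T\min\{1/Y_t,1\}\le\mathcal{O}\big(\rho^{-1}\log(T\log T/\delta)\big).$$
   Context: The convention $1/0=+\infty$ is used, so $\min\{1/Y_t,1\}=1$ when $Y_t=0$. $\mathcal{O}(\cdot)$ hides an absolute constant. *)

From HB Require Import structures.
From mathcomp Require Import all_boot all_order all_algebra.
From mathcomp Require Import all_classical all_reals all_analysis.
Set Implicit Arguments. Unset Strict Implicit. Unset Printing Implicit Defensive.
Import Order.TTheory GRing.Theory Num.Theory.
Local Open Scope classical_set_scope.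
Local Open Scope ring_scope.

Definition mutually_independent d (T : measurableType d) (R : realType)
    (P : probability T R) (X : nat -> {RV P >-> R}) : Prop :=
  forall (S : seq nat) (B : nat -> set R),
    uniq S -> (forall i, measurable (B i)) ->
    P (\bigcap_(i in [set` S]) (X i @^-1` B i)) =
    (\prod_(i <- S) P (X i @^-1` B i))%E.

Definition is_bernoulli d (T : measurableType d) (R : realType)
    (P : probability T R) (rho : R) (X : {RV P >-> R}) : Prop :=
  (forall w, X w = 0 \/ X w = 1) /\ P (X @^-1` [set 1]) = rho%:E.

Definition partial_count (R : realType) (X : nat -> R) (t : nat) : R :=
  \sum_(1 <= tau < t.+1) X tau.

(* min{1/y, 1} with the convention 1/0 = +oo *)
Definition min_inv1 (R : realType) (y : R) : R :=
  if y == 0 then 1 else Num.min (y^-1) 1.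

From HB Require Import structures.
From mathcomp Require Import all_boot all_order all_algebra.
From mathcomp Require Import all_classical all_reals all_analysis.
From mathcomp Require Import ring lra zify.
Set Implicit Arguments.
Unset Strict Implicit.
Unset Printing Implicit Defensive.

Import Order.TTheory GRing.Theory Num.Theory.
Local Open Scope classical_set_scope.
Local Open Scope ring_scope.

(* By a Chernoff bound, P(Y_t < rho t/4) <= exp(-rho t/4), which is at most
   delta/T once t >= t0 := (4/rho) ln(T/delta); a union bound over t <= T gives
   Y_t >= rho t/4 for all t in [t0, T] with probability at least 1 - delta.
   On that event the terms with t < t0 contribute at most t0, and the others
   at most (4/rho) sum_t 1/t <= (4/rho)(1 + ln T).  Only X_1, ..., X_T matter,
   so all probabilities are computed on the finite space of 0/1 patterns of
   length T, whose law is, by independence, the product Bernoulli weight. *)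

Section RealBounds.
Variable R : realType.
Implicit Types (a : R) (m : nat).

Lemma ln_ge_1B_inv a : 0 < a -> 1 - a^-1 <= ln a.
Proof.
move=> a_gt0; have := @le_ln1Dx R (a^-1 - 1).
rewrite [1 + _]addrC subrK lnV ?posrE // -subr_gt0 opprK subrK invr_gt0.
by move=> /(_ a_gt0); lra.
Qed.

Lemma ln2_ge : 7 / 12 <= ln (2 : R).
Proof.
have -> : (2 : R) = 4 / 3 * (3 / 2) by field.
rewrite lnM ?posrE ?divr_gt0 //.
have := @ln_ge_1B_inv (4 / 3); have := @ln_ge_1B_inv (3 / 2).
rewrite !invf_div !divr_gt0 //; lra.
Qed.

Lemma harmonic_le_ln m : \sum_(1 <= t < m.+1) (t%:R : R)^-1 <= 1 + ln m%:R.
Proof.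
elim: m => [|[|m] IH]; first by rewrite big_geq // ln0 // addr0.
  by rewrite big_nat1 invr1 ln1 addr0.
rewrite big_nat_recr //=.
have inv_le_ln_ratio : (m.+2%:R : R)^-1 <= ln m.+2%:R - ln m.+1%:R.
  rewrite -ln_div ?posrE ?ltr0n //.
  have := @ln_ge_1B_inv (m.+2%:R / m.+1%:R).
  rewrite invf_div divr_gt0 ?ltr0n // => /(_ isT).
  suff -> : 1 - m.+1%:R / m.+2%:R = m.+2%:R^-1 :> R by [].
  by field; apply: lt0r_neq0; have := ler0n R m; lra.
by apply: le_trans (lerD IH inv_le_ln_ratio) _; lra.
Qed.

Lemma sum_nat_lt_le (t0 : R) m : 0 <= t0 ->
  \sum_(1 <= t < m.+1) (if t%:R < t0 then 1 else 0 : R) <= t0.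
Proof.
move=> t0_ge0.
suff : \sum_(1 <= t < m.+1) (if t%:R < t0 then 1 else 0 : R) <= Num.min m%:R t0.
  by rewrite le_min => /andP[].
elim: m => [|m IH]; first by rewrite big_geq // le_min ler0n t0_ge0.
rewrite big_nat_recr //= le_min; move: IH; rewrite le_min => /andP[IHm IHt].
have := ler0n R m; rewrite -natr1; case: ltP => /= ? ?; apply/andP; split; lra.
Qed.

Lemma min_inv1_le1 (y : R) : min_inv1 y <= 1.
Proof. by rewrite /min_inv1; case: eqP => // _; rewrite ge_min lexx orbT. Qed.

Lemma min_inv1_le_inv (y : R) : 0 < y -> min_inv1 y <= y^-1.
Proof. by move=> y_gt0; rewrite /min_inv1 gt_eqF // ge_min lexx. Qed.

Lemma sum_min_inv1_le (c : nat -> R) (T : nat) a (t0 : R) : 0 < a -> 0 <= t0 ->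
  (forall t, (1 <= t <= T)%N -> t0 <= t%:R -> a * t%:R <= c t) ->
  \sum_(1 <= t < T.+1) min_inv1 (c t) <= t0 + a^-1 * (1 + ln T%:R).
Proof.
move=> a_gt0 t0_ge0 c_ge.
apply: (@le_trans _ _
  (\sum_(1 <= t < T.+1) ((if t%:R < t0 then 1 else 0) + a^-1 * t%:R^-1))).
  rewrite big_nat_cond [leRHS]big_nat_cond; apply: ler_sum => t /andP[tT _].
  have t_gt0 : (0 : R) < t%:R by rewrite ltr0n; case/andP: tT.
  have inv_ge0 : 0 <= a^-1 * t%:R^-1 by rewrite mulr_ge0 // invr_ge0 ltW.
  have [lt_t_t0|le_t0_t] := ltP t%:R t0.
    by apply: le_trans (min_inv1_le1 _) _; rewrite lerDl.
  have act_le : a * t%:R <= c t by apply: c_ge => //; rewrite -ltnS.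
  have act_gt0 : 0 < a * t%:R by rewrite mulr_gt0.
  have ct_gt0 := lt_le_trans act_gt0 act_le.
  rewrite add0r -invfM; apply: le_trans (min_inv1_le_inv ct_gt0) _.
  by rewrite lef_pV2.
rewrite big_split /= -mulr_sumr; apply: lerD; first exact: sum_nat_lt_le.
by rewrite ler_pM2l ?invr_gt0 // harmonic_le_ln.
Qed.

Lemma ln_mul_ln_div_ge (T delta : R) : 2 <= T -> 0 < delta <= 1 ->
  4 * ln (T / delta) + 4 * (1 + ln T) <= 100 * ln (T * ln T / delta).
Proof.
move=> T_ge2 /andP[delta_gt0 delta_le1].
have T_gt0 : 0 < T by lra.
have lnT_ge : 7 / 12 <= ln T by apply: le_trans ln2_ge _; rewrite ler_ln ?posrE //; lra.
have lnT_gt0 : 0 < ln T by lra.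
have lnlnT_ge : - (5 / 7) <= ln (ln T).
  have : (ln T)^-1 <= 12 / 7 by rewrite -invf_div lef_pV2 ?posrE ?divr_gt0.
  have := ln_ge_1B_inv lnT_gt0; lra.
have TlnT_ge : 7 / 6 <= T * ln T.
  have : 2 * (7 / 12) <= T * ln T by apply: ler_pM => //; lra.
  lra.
have ln_TlnT_ge : 1 / 7 <= ln T + ln (ln T).
  rewrite -lnM ?posrE //.
  have : (T * ln T)^-1 <= 6 / 7.
    by rewrite -invf_div lef_pV2 ?posrE ?divr_gt0 ?mulr_gt0.
  have := ln_ge_1B_inv (mulr_gt0 T_gt0 lnT_gt0); lra.
have := ln_le0 delta_le1.
rewrite !ln_div ?posrE ?mulr_gt0 // lnM ?posrE //; lra.
Qed.

End RealBounds.

Section FiniteSums.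
Variables (R : realType) (F : finType) (w : F -> R).
Hypothesis w_ge0 : forall x, 0 <= w x.

Lemma sum_lt_le_expR (c : F -> R) (a : R) :
  \sum_(x | c x < a) w x <= expR a * \sum_x expR (- c x) * w x.
Proof.
rewrite mulr_sumr big_mkcond /=; apply: ler_sum => x _.
rewrite mulrA -expRD; case: ltP => [lt_ca|_]; last by rewrite mulr_ge0 ?expR_ge0.
rewrite ler_peMl // -expR0 ler_expR; lra.
Qed.

Lemma sum_le_union_bound (I : eqType) (s : seq I) (A : I -> pred F) (B : pred F) :
  (forall x, B x -> has (A ^~ x) s) ->
  \sum_(x | B x) w x <= \sum_(i <- s) \sum_(x | A i x) w x.
Proof.
move=> B_cover; rewrite (exchange_big_dep xpredT) //= [leRHS](bigID B) /=.
have w_le_sum x : B x -> w x <= \sum_(i <- s | A i x) w x.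
  case/B_cover/hasP => i i_s Aix; rewrite (big_rem i) //= Aix lerDl.
  by rewrite sumr_ge0.
apply: le_trans (ler_sum _ w_le_sum) _.
by rewrite lerDl sumr_ge0 // => x _; rewrite sumr_ge0.
Qed.

End FiniteSums.

Section BernoulliPatterns.
Variables (R : realType) (rho : R) (n : nat).
Implicit Types (x : {ffun 'I_n -> bool}) (t : nat).

Definition bernoulli_mass (b : bool) : R := if b then rho else 1 - rho.

Definition pattern_weight x : R := \prod_j bernoulli_mass (x j).

Definition pattern_count x t : R := \sum_(j < n | (j < t)%N) (x j)%:R.

Lemma pattern_weight_ge0 x : 0 <= rho <= 1 -> 0 <= pattern_weight x.
Proof.
case/andP=> rho_ge0 rho_le1; apply: prodr_ge0 => j _.
by case: (x j); rewrite /= ?subr_ge0.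
Qed.

Lemma sum_pattern_weight : \sum_x pattern_weight x = 1.
Proof.
rewrite -(bigA_distr_bigA (fun _ => bernoulli_mass)) /=.
by apply: big1 => j _; rewrite big_bool /= addrC subrK.
Qed.

Lemma pattern_mgfE t : (t <= n)%N ->
  \sum_x expR (- pattern_count x t) * pattern_weight x =
  (1 - rho * (1 - expR (-1))) ^+ t.
Proof.
move=> le_tn.
pose g (j : 'I_n) (b : bool) := bernoulli_mass b * expR (- ((j < t)%N && b)%:R).
have termE x : expR (- pattern_count x t) * pattern_weight x = \prod_j g j (x j).
  rewrite big_split /= mulrC; congr (_ * _).
  rewrite -sumrN expR_sum big_mkcond /=; apply: eq_bigr => j _.
  by case: ltnP; rewrite //= oppr0 expR0.
rewrite (eq_bigr _ (fun x _ => termE x)) -(bigA_distr_bigA g) /=.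
rewrite (eq_bigr (fun j : 'I_n => if (j < t)%N then 1 - rho * (1 - expR (-1)) else 1)).
  by rewrite -big_mkcond -(big_ord_widen _ (fun=> _)) //= prodr_const card_ord.
move=> j _; rewrite big_bool /g /=; case: ltnP => _ /=.
  by rewrite oppr0 expR0; ring.
by rewrite oppr0 expR0 !mulr1 addrC subrK.
Qed.

Lemma pattern_mgf_le t : 0 <= rho <= 1 -> (t <= n)%N ->
  \sum_x expR (- pattern_count x t) * pattern_weight x <=
  expR (- (rho / 2 * t%:R)).
Proof.
move=> /andP[rho_ge0 rho_le1] le_tn.
have -> : - (rho / 2 * t%:R) = t%:R * - (rho / 2) by ring.
rewrite pattern_mgfE // expRM_natl.
have e_ge2 : 2 <= expR (1 : R) by have := expR_ge1Dx (1 : R); lra.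
have expRN1_le : expR (-1) <= 2^-1 :> R by rewrite expRN lef_pV2 ?posrE ?expR_gt0.
apply: lerXn2r; rewrite ?nnegrE ?expR_ge0 //.
  by have := mulr_ge0 rho_ge0 (expR_ge0 (-1 : R)); lra.
apply: le_trans (expR_ge1Dx _); have := ler_wpM2l rho_ge0 expRN1_le; lra.
Qed.

Lemma pattern_count_lower_tail t : 0 <= rho <= 1 -> (t <= n)%N ->
  \sum_(x | pattern_count x t < rho / 4 * t%:R) pattern_weight x <=
  expR (- (rho / 4 * t%:R)).
Proof.
move=> rho01 le_tn.
apply: le_trans (sum_lt_le_expR (pattern_weight_ge0 ^~ rho01) _ _) _.
apply: le_trans (ler_wpM2l (expR_ge0 _) (pattern_mgf_le rho01 le_tn)) _.
by rewrite -expRD ler_expR; lra.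
Qed.

Lemma sum_pattern_weight_good_ge (delta : R) (good : pred {ffun 'I_n -> bool}) :
  0 < rho <= 1 -> 0 < delta ->
  (forall x, (forall t, (1 <= t <= n)%N -> 4 / rho * ln (n%:R / delta) <= t%:R ->
     rho / 4 * t%:R <= pattern_count x t) -> good x) ->
  1 - delta <= \sum_(x | good x) pattern_weight x.
Proof.
move=> /andP[rho_gt0 rho_le1] delta_gt0 tail_good.
have rho01 : 0 <= rho <= 1 by rewrite ltW.
set t0 := 4 / rho * ln (n%:R / delta).
have bad_le : \sum_(x | ~~ good x) pattern_weight x <=
    \sum_(t <- [seq t <- index_iota 1 n.+1 | t0 <= t%:R])
      \sum_(x | pattern_count x t < rho / 4 * t%:R) pattern_weight x.
  apply: sum_le_union_bound => x; first exact: pattern_weight_ge0.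
  apply: contraR => /hasPn tail_ok; apply: tail_good => t t_range t0_le.
  by rewrite leNgt tail_ok // mem_filter t0_le mem_index_iota ltnS.
have tail_le t : (1 <= t <= n)%N -> t0 <= t%:R ->
    \sum_(x | pattern_count x t < rho / 4 * t%:R) pattern_weight x <= delta / n%:R.
  move=> /andP[t_ge1 t_le_n] t0_le.
  apply: le_trans (pattern_count_lower_tail rho01 t_le_n) _.
  have n_gt0 : 0 < n%:R :> R by rewrite ltr0n (leq_trans t_ge1).
  have -> : delta / n%:R = expR (- (rho / 4 * t0)).
    have -> : rho / 4 * t0 = ln (n%:R / delta).
      by rewrite /t0; field; exact: lt0r_neq0.
    by rewrite expRN lnK ?invf_div // posrE divr_gt0.
  by rewrite ler_expR lerN2 ler_pM2l ?divr_gt0.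
have := sum_pattern_weight; rewrite (bigID good) /= => sum_good_bad.
suff : \sum_(x | ~~ good x) pattern_weight x <= delta by lra.
apply: le_trans bad_le _; rewrite big_filter big_mkcond /=.
apply: (@le_trans _ _ (\sum_(1 <= t < n.+1) delta / n%:R)).
  rewrite big_nat_cond [leRHS]big_nat_cond; apply: ler_sum => t /andP[t_range _].
  case: ifP => [|_]; first exact: tail_le.
  exact: divr_ge0 (ltW delta_gt0) (ler0n _ _).
rewrite sumr_const_nat subn1 /=.
have [->|n_gt0] := posnP n; first by rewrite mulr0n ltW.
by rewrite -(mulr_natr (delta / n%:R)) divfK // pnatr_eq0 -lt0n.
Qed.

End BernoulliPatterns.

Arguments pattern_count {R n} x t.

Lemma measure_preimage_fin d (T : measurableType d) (R : realType)
    (mu : {measure set T -> \bar R}) (F : finType) (f : T -> F) (A : pred F) :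
  (forall x, measurable (f @^-1` [set x])) ->
  mu (f @^-1` [set x | A x]) = (\sum_(x | A x) mu (f @^-1` [set x]))%E.
Proof.
move=> fiber_meas.
have -> : f @^-1` [set x | A x] = \bigcup_(x in [set x | A x]) f @^-1` [set x].
  by apply/seteqP; split => [w Afw | w [x Ax /= ->]] //; exists (f w).
rewrite measure_fin_bigcup //; last 2 first.
- exact: finite_finset.
- by move=> x y _ _ [w [/= <- <-]].
rewrite (fsbigE [seq x <- enum F | A x]); last 3 first.
- by rewrite filter_uniq // enum_uniq.
- by move=> x; rewrite /= mem_filter => /andP[].
- by move=> x /= Ax; rewrite mem_filter mem_enum Ax.
rewrite big_filter_cond big_enum_cond /=; apply: eq_bigl => x.
by apply/idP/idP => [/andP[]//|Ax]; rewrite Ax; exact: mem_set.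
Qed.

Section BernoulliSequence.
Variables (R : realType) (d : measure_display) (Omega : measurableType d)
  (P : probability Omega R) (rho : R) (X : nat -> {RV P >-> R}).
Hypothesis X_bernoulli : forall i, is_bernoulli rho (X i).

Lemma bernoulli_le1 : rho <= 1.
Proof.
have := probability_le1 P (measurable_funPTI (X 0) (measurable_set1 1)).
by rewrite (proj2 (X_bernoulli 0)) lee_fin.
Qed.

Lemma bernoulliE i w : X i w = (X i w == 1)%:R.
Proof. by case: (proj1 (X_bernoulli i) w) => ->; rewrite ?eqxx // eq_sym oner_eq0. Qed.

Lemma bernoulli_preimage i (b : bool) :
  P (X i @^-1` [set b%:R]) = (bernoulli_mass rho b)%:E.
Proof.
case: b; first exact: (proj2 (X_bernoulli i)).
have -> : X i @^-1` [set false%:R] = ~` (X i @^-1` [set 1]).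
  apply/seteqP; split => w /=; first by move=> -> /eqP; rewrite eq_sym oner_eq0.
  by case: (proj1 (X_bernoulli i) w).
by rewrite probability_setC ?(proj2 (X_bernoulli i)).
Qed.

Definition pattern n w : {ffun 'I_n -> bool} := [ffun j : 'I_n => X j.+1 w == 1].

Lemma pattern_preimageE n x : pattern n @^-1` [set x] =
  \bigcap_(i in [set` iota 1 n]) X i @^-1` [set (nth false (fgraph x) i.-1)%:R].
Proof.
apply/seteqP; split => w /=.
  move=> <- i /=; rewrite mem_iota => /andP[i_ge1 i_lt].
  have j_lt : (i.-1 < n)%N by rewrite -ltnS prednK // -add1n.
  rewrite (nth_fgraph_ord false (Ordinal j_lt)) ffunE /= prednK //.
  exact: bernoulliE.
move=> in_cells; apply/ffunP => j; rewrite ffunE.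
have j_in : j.+1 \in iota 1 n by have := ltn_ord j; rewrite mem_iota; lia.
have := in_cells _ j_in; rewrite /= (nth_fgraph_ord false j) => ->.
by case: (x j); rewrite ?eqxx // eq_sym oner_eq0.
Qed.

Lemma measurable_pattern_preimage n x : measurable (pattern n @^-1` [set x]).
Proof.
rewrite pattern_preimageE; apply: fin_bigcap_measurable; first exact: finite_seq.
by move=> i _; apply: measurable_funPTI; exact: measurable_set1.
Qed.

Lemma partial_count_pattern n t w : (t <= n)%N ->
  partial_count (fun tau => X tau w) t = pattern_count (pattern n w) t.
Proof.
move=> le_tn; rewrite /partial_count /pattern_count big_add1 /= big_mkord.
rewrite (big_ord_widen n (fun j => X j.+1 w)) //.
by apply: eq_bigr => j _; rewrite ffunE -bernoulliE.
Qed.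

Hypothesis X_indep : mutually_independent X.

Lemma probability_pattern n x :
  P (pattern n @^-1` [set x]) = (pattern_weight rho x)%:E.
Proof.
rewrite pattern_preimageE X_indep ?iota_uniq //.
under eq_bigr do rewrite bernoulli_preimage.
rewrite prodEFin /pattern_weight; congr EFin.
have -> : iota 1 n = index_iota 1 n.+1 by rewrite /index_iota subn1.
rewrite big_add1 /= big_mkord.
by apply: eq_bigr => j _; rewrite nth_fgraph_ord.
Qed.

Lemma probability_pattern_pred n (A : pred {ffun 'I_n -> bool}) :
  P (pattern n @^-1` [set x | A x]) = (\sum_(x | A x) pattern_weight rho x)%:E.
Proof.
rewrite measure_preimage_fin; last exact: measurable_pattern_preimage.
by rewrite -sumEFin; apply: eq_bigr => x _; exact: probability_pattern.
Qed.

End BernoulliSequence.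

Theorem lemma8 (R : realType) :
  exists C : R, 0 < C /\
  forall (d : measure_display) (Omega : measurableType d)
    (P : probability Omega R) (rho : R) (X : nat -> {RV P >-> R})
    (delta : R) (T : nat),
    0 < rho -> (forall n, is_bernoulli rho (X n)) -> mutually_independent X ->
    0 < delta < 1 -> (2 <= T)%N ->
    ((1 - delta)%:E <=
     P [set w | (\sum_(1 <= t < T.+1)
                   min_inv1 (partial_count (fun tau => X tau w) t)
                <= C * rho^-1 * ln (T%:R * ln T%:R / delta))%R])%E.
Proof.
exists 100; split => // d Omega P rho X delta T rho_gt0 X_bern X_indep.
move=> /andP[delta_gt0 delta_lt1] T_ge2.
set bound := 100 * rho^-1 * _.
pose good (x : {ffun 'I_T -> bool}) :=
  \sum_(1 <= t < T.+1) min_inv1 (pattern_count x t) <= bound.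
have sum_patternE w : \sum_(1 <= t < T.+1) min_inv1 (partial_count (X^~ w) t) =
    \sum_(1 <= t < T.+1) min_inv1 (pattern_count (pattern X T w) t).
  apply: eq_big_nat => t /andP[_ t_le].
  by rewrite (partial_count_pattern X_bern (n := T)).
have -> : [set w | \sum_(1 <= t < T.+1) min_inv1 (partial_count (X^~ w) t) <= bound] =
          pattern X T @^-1` [set x | good x].
  by apply/seteqP; split => w; rewrite /= sum_patternE.
rewrite (probability_pattern_pred X_bern X_indep) lee_fin.
apply: sum_pattern_weight_good_ge => //; first by rewrite rho_gt0 (bernoulli_le1 X_bern).
move=> x tail_ok; apply: le_trans (sum_min_inv1_le _ _ tail_ok) _.
- by rewrite divr_gt0.
- apply: mulr_ge0; first by rewrite divr_ge0 ?ltW.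
  apply: ln_ge0; rewrite ler_pdivlMr // mul1r (le_trans (ltW delta_lt1)) //.
  by rewrite ler1n ltnW.
have -> : 4 / rho * ln (T%:R / delta) + (rho / 4)^-1 * (1 + ln T%:R) =
          rho^-1 * (4 * ln (T%:R / delta) + 4 * (1 + ln T%:R)).
  by field; exact: lt0r_neq0.
rewrite /bound mulrAC [leRHS]mulrC ler_pM2l ?invr_gt0 //.
by apply: ln_mul_ln_div_ge; rewrite ?(ler_nat R 2) // delta_gt0 ltW.
Qed.
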